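(* Let $F_2$ be the free group on $x,y$ and let $w(x,y)=x^{a_1}y^{b_1}x^{a_2}y^{b_2}\cdots x^{a_k}y^{b_k}$ with $k\ge 1$ and all integers $a_i\neq 0$, $b_i\neq 0$. If all $b_i$ are positive, then either the word map $w:\mathrm{SL}(2,\mathbb{C})^2\to\mathrm{SL}(2,\mathbb{C})$ is surjective, or $w=v^2$ for some word $v\neq \mathrm{id}$ in $F_2$.
   Context: The word map $w:\mathrm{SL}(2,\mathbb{C})^2\to \mathrm{SL}(2,\mathbb{C})$ sends $(X,Y)$ to $X^{a_1}Y^{b_1}\cdots X^{a_k}Y^{b_k}$. *)

From HB Require Import structures.
From mathcomp Require Import all_boot all_order all_algebra.
From mathcomp Require Import complex.
From mathcomp Require Import reals Rstruct.
Set Implicit Arguments. Unset Strict Implicit. Unset Printing Implicit Defensive.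
Import Order.TTheory GRing.Theory Num.Theory.
Local Open Scope ring_scope.

Definition C : Type := (Rdefinitions.R)[i].
Definition Cfield : fieldType := C.

Definition M2 := 'M[C]_2.
Definition inSL2 (X : 'M[C]_2) : Prop := \det X = 1.

(* The word w = x^{a_1} y^{b_1} ... x^{a_k} y^{b_k} is encoded by the list
   ab = [:: (a_1,b_1); ...; (a_k,b_k)] of integer exponent pairs. *)
Definition word_map (ab : seq (int * int)) (X Y : 'M[C]_2) : 'M[C]_2 :=
  \prod_(p <- ab) (X ^ p.1 * Y ^ p.2).

Definition word_map_surjective (ab : seq (int * int)) : Prop :=
  forall Z : 'M[C]_2, inSL2 Z ->
    exists X Y : 'M[C]_2, [/\ inSL2 X, inSL2 Y & word_map ab X Y = Z].

(* The free group F_2 on x, y: elements are words in the letters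
   x, x^-1, y, y^-1, two words being equal in F_2 iff they have the same
   free reduction.  A letter is (g, e) with g = false for x, true for y,
   and e = true for an inverse letter. *)
Definition letter := (bool * bool)%type.
Definition inv_letter (l : letter) : letter := (l.1, ~~ l.2).

Fixpoint freduce (s : seq letter) : seq letter :=
  match s with
  | [::] => [::]
  | l :: s' =>
      match freduce s' with
      | l' :: r => if l' == inv_letter l then r else l :: l' :: r
      | [::] => [:: l]
      end
  end.

Definition F2_eq (u v : seq letter) : Prop := freduce u = freduce v.

Definition gen_pow (g : bool) (a : int) : seq letter :=
  nseq `|a|%N (g, a < 0).

Definition word_of (ab : seq (int * int)) : seq letter :=
  flatten [seq gen_pow false p.1 ++ gen_pow true p.2 | p <- ab].

(* Write B = b_1 + ... + b_k and P(t) = a_1 + a_2 t^(b_1) + ... + a_k t^(b_1 + ... + b_(k-1))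
   ([ydeg] and [xpoly] below).  The image of w is closed under conjugation, and w(1, Y) = Y^B
   puts every diagonal matrix and a nontrivial unipotent into it; by the Jordan form it is all
   of SL(2,C) as soon as it also contains -U for some unipotent U <> 1.  For B odd,
   -U = (-[[1,1],[0,1]])^B.  For B = 2m,
     w([[1,1],[0,1]], diag(nu, 1/nu)) = [[nu^B, nu^(-B) P(nu^2)], [0, nu^(-B)]],
   which is of this form when (nu^2)^m = -1 and P(nu^2) <> 0.  Otherwise P, of degree < 2m,
   vanishes at the m distinct roots of t^m + 1, so its coefficients of t^i and t^(m+i) agree.
   The coefficient of t^m is then a_1 <> 0, so some partial sum b_1 + ... + b_j equals m, and
   the two halves of the exponent list have the same polynomial, hence coincide: w = v^2, where
   v is nontrivial because its exponent sum in y is m > 0. *)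

From mathcomp Require Import all_boot all_order all_algebra all_field complex ring zify.
From mathcomp Require Import reals Rstruct.
Set Implicit Arguments. Unset Strict Implicit. Unset Printing Implicit Defensive.
Import Order.TTheory GRing.Theory Num.Theory.
Local Open Scope ring_scope.

Lemma exprz_conj (R : unitRingType) (g x : R) (z : int) :
  g \is a GRing.unit -> x \is a GRing.unit -> (g * x * g^-1) ^ z = g * x ^ z * g^-1.
Proof.
move=> ug ux.
have conjX n : (g * x * g^-1) ^+ n = g * x ^+ n * g^-1.
  elim: n => [|n IH]; first by rewrite !expr0 mulr1 divrr.
  by rewrite exprS IH exprS !mulrA (mulrVK ug).
case: z => n; first by rewrite -!exprnP conjX.
rewrite /exprz conjX.
have uxn : x ^+ n.+1 \is a GRing.unit by rewrite unitrX.
by rewrite !invrM ?unitrMr ?unitrV // invrK mulrA.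
Qed.

Lemma exprz_pos (R : unitRingType) (x : R) (b : int) : 0 < b -> x ^ b = x ^+ `|b|%N.
Proof. by move=> b_gt0; rewrite -{1}(gez0_abs (ltW b_gt0)). Qed.

Lemma mulmx1_invr (R : comUnitRingType) n (A B : 'M[R]_n.+1) : A * B = 1 -> A^-1 = B.
Proof.
move=> AB1; have [uA _] := mulmx1_unit AB1.
by rewrite -[B](mulKr (uA : A \is a GRing.unit)) AB1 mulr1.
Qed.

Lemma det_conj (R : comUnitRingType) n (P A : 'M[R]_n.+1) :
  P \is a GRing.unit -> \det (P * A * P^-1) = \det A.
Proof.
move=> uP; rewrite -!mulmxE !det_mulmx mulrAC -det_mulmx mulmxE divrr //.
by rewrite det1 mul1r.
Qed.

Section TwoByTwo.

Variable R : comUnitRingType.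
Implicit Types (a b c d e u v : R) (M : 'M[R]_2).

Definition mx2 a b c d : 'M[R]_2 :=
  \matrix_(i, j) if i == 0 :> nat then (if j == 0 :> nat then a else b)
                 else (if j == 0 :> nat then c else d).

Lemma mx2_eta M : M = mx2 (M 0 0) (M 0 1) (M 1 0) (M 1 1).
Proof.
apply/matrixP => i j; rewrite mxE.
by case: i => [[|[|i]] ?]; case: j => [[|[|j]] ?] //=; congr (M _ _); exact: val_inj.
Qed.

Lemma mulmx2 a b c d a' b' c' d' :
  mx2 a b c d * mx2 a' b' c' d' =
  mx2 (a * a' + b * c') (a * b' + b * d') (c * a' + d * c') (c * b' + d * d').
Proof.
rewrite -mulmxE; apply/matrixP => i j; rewrite !mxE !big_ord_recr big_ord0 /= !mxE /= add0r.
by case: i => [[|[|i]] ?]; case: j => [[|[|j]] ?].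
Qed.

Lemma mx2_1 : 1 = mx2 1 0 0 1.
Proof. by apply/matrixP => i j; rewrite !mxE; case: i => [[|[|i]] ?]; case: j => [[|[|j]] ?]. Qed.

Lemma det_mx2 a b c d : \det (mx2 a b c d) = a * d - b * c.
Proof.
rewrite (expand_det_row _ 0) !big_ord_recr big_ord0 /= /cofactor !det_mx11 !mxE /=.
by rewrite add0r !expr0 expr1 !mul1r mulN1r mulrN.
Qed.

Lemma unit_mx2 a b c d :
  (mx2 a b c d \is a GRing.unit) = (a * d - b * c \is a GRing.unit).
Proof. by rewrite -det_mx2 -unitmxE. Qed.

Lemma expr_mx2_diag n u v : mx2 u 0 0 v ^+ n = mx2 (u ^+ n) 0 0 (v ^+ n).
Proof.
elim: n => [|n IH]; first by rewrite !expr0 mx2_1.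
by rewrite exprS IH mulmx2 !exprS; congr mx2; ring.
Qed.

Lemma expr_mx2_upper n u e :
  mx2 u e 0 u ^+ n = mx2 (u ^+ n) (n%:R * u ^+ n.-1 * e) 0 (u ^+ n).
Proof.
elim: n => [|n IH]; first by rewrite !expr0 mx2_1 !mul0r.
rewrite exprS IH mulmx2 !exprS; congr mx2; try ring.
by case: n {IH} => [|n] /=; rewrite ?exprS; ring.
Qed.

Lemma exprz_mx2_unipotent (z : int) e : mx2 1 e 0 1 ^ z = mx2 1 (z%:~R * e) 0 1.
Proof.
have powE n : mx2 1 e 0 1 ^+ n = mx2 1 (n%:R * e) 0 1.
  by rewrite expr_mx2_upper !expr1n mulr1.
case: z => n; first by rewrite -exprnP powE.
rewrite /exprz powE NegzE; apply: mulmx1_invr; rewrite mulmx2 mx2_1 rmorphN /=.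
by congr mx2; ring.
Qed.

End TwoByTwo.

Lemma mx2_triangularize (F : numClosedFieldType) (A : 'M[F]_2) :
  exists P (u c v : F), P \is a GRing.unit /\ A = P * mx2 u c 0 v * P^-1.
Proof.
rewrite (mx2_eta A); move: (A 0 0) (A 0 1) (A 1 0) (A 1 1) => p q r s.
have [->|r0] := eqVneq r 0.
  by exists 1, p, q, s; rewrite unitr1 mul1r invr1 mulr1.
pose D := (p + s) ^+ 2 - 4 * (p * s - q * r).
pose mu := (p + s + sqrtC D) / 2.
have mu_root : mu ^+ 2 - (p + s) * mu + (p * s - q * r) = 0.
  have -> : mu ^+ 2 - (p + s) * mu + (p * s - q * r) = (sqrtC D ^+ 2 - D) / 4.
    by rewrite /mu /D; field.
  by rewrite (sqrtCK D) subrr mul0r.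
(* The first column (mu - s, r) of P is an eigenvector of A for the eigenvalue mu. *)
pose P := mx2 (mu - s) 1 r 0.
have uP : P \is a GRing.unit by rewrite unit_mx2 unitfE mulr0 mul1r sub0r oppr_eq0.
exists P, mu, 1, (p + s - mu); split => //.
suff AP : mx2 p q r s * P = P * mx2 mu 1 0 (p + s - mu) by rewrite -AP mulrK.
rewrite !mulmx2; congr mx2; try ring.
apply/subr0_eq; transitivity (- (mu ^+ 2 - (p + s) * mu + (p * s - q * r))); first ring.
by rewrite mu_root oppr0.
Qed.

Lemma separable_Xn_add_1 (R : idomainType) n :
  n%:R != 0 :> R -> @separable_poly R ('X^n + 1).
Proof.
case: n => [/eqP// | n nz_n]; rewrite unlock linearD /= derivC addr0.
rewrite derivXn -scaler_nat coprimepZr //= exprS coprimep_sym.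
by rewrite coprimep_addl_mul coprimep1.
Qed.

Lemma roots_Xn_add_1 (F : closedFieldType) n : n%:R != 0 :> F ->
  exists rs : seq F, [/\ uniq rs, size rs = n & {in rs, forall z, z ^+ n = -1}].
Proof.
move=> nz_n; have n_gt0 : (0 < n)%N by case: n nz_n; rewrite ?eqxx.
have [rs Xn1] := closed_field_poly_normal ('X^n + 1%:P : {poly F}).
rewrite lead_coefXnaddC // scale1r in Xn1.
exists rs; split.
- by rewrite -separable_prod_XsubC -Xn1 polyC1 separable_Xn_add_1.
- by have := size_XnaddC (1 : F) n_gt0; rewrite Xn1 size_prod_XsubC => -[].
- move=> z z_rs; have : root ('X^n + 1%:P) z by rewrite Xn1 root_prod_XsubC.
  by rewrite /root !hornerE addr_eq0 => /eqP.
Qed.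

Lemma take_drop_poly_eq (R : idomainType) m (rs : seq R) (p : {poly R}) :
  uniq rs -> size rs = m -> {in rs, forall z, z ^+ m = -1} ->
  (size p <= m + m)%N -> all (root p) rs -> take_poly m p = drop_poly m p.
Proof.
move=> rs_uniq rs_size rs_root p_size p_rs; apply/eqP; rewrite -subr_eq0.
apply: contraT => nz.
have vanish : all (root (take_poly m p - drop_poly m p)) rs.
  apply/allP => z z_rs; move/allP/(_ z z_rs): p_rs.
  by rewrite -{1}(poly_take_drop m p) /root !hornerE rs_root // mulrN1.
have := max_poly_roots nz vanish rs_uniq.
rewrite rs_size ltnNge (leq_trans (size_polyD _ _)) // geq_max size_take_poly.
by rewrite size_polyN size_drop_poly leq_subLR p_size.
Qed.

Lemma mulXn_inj (R : idomainType) (p q : {poly R}) m n :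
  p`_0 != 0 -> q`_0 != 0 -> p * 'X^m = q * 'X^n -> m = n /\ p = q.
Proof.
have le_exp (p' q' : {poly R}) m' n' :
    p'`_0 != 0 -> p' * 'X^m' = q' * 'X^n' -> (n' <= m')%N.
  move=> p0 E; have := congr1 (fun r : {poly R} => r`_m') E.
  rewrite !coefMXn ltnn subnn.
  by case: ltnP => // _ p0'; move: p0; rewrite p0' eqxx.
move=> p0 q0 E; have mn : m = n.
  by apply/anti_leq; rewrite (le_exp _ _ _ _ p0 E) (le_exp _ _ _ _ q0 (esym E)).
by split => //; move: E; rewrite mn => /mulIf; apply; rewrite monic_neq0 ?monicXn.
Qed.

Implicit Types (ab : seq (int * int)) (X Y Z g : 'M[C]_2).

Lemma word_map_nil X Y : word_map [::] X Y = 1.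
Proof. by rewrite /word_map big_nil. Qed.

Lemma word_map_cons p ab X Y :
  word_map (p :: ab) X Y = X ^ p.1 * Y ^ p.2 * word_map ab X Y.
Proof. by rewrite /word_map big_cons. Qed.

Lemma unit_SL2 X : inSL2 X -> X \is a GRing.unit.
Proof. by move=> detX; change (X \in unitmx); rewrite unitmxE detX unitr1. Qed.

Lemma word_map_conj ab g X Y :
  g \is a GRing.unit -> X \is a GRing.unit -> Y \is a GRing.unit ->
  word_map ab (g * X * g^-1) (g * Y * g^-1) = g * word_map ab X Y * g^-1.
Proof.
move=> ug uX uY; elim: ab => [|p ab IH]; first by rewrite !word_map_nil mulr1 divrr.
by rewrite !word_map_cons IH !exprz_conj // !mulrA !(mulrVK ug).
Qed.

Definition word_image ab Z :=
  exists X Y, [/\ inSL2 X, inSL2 Y & word_map ab X Y = Z].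

Lemma word_image_conj ab g Z :
  g \is a GRing.unit -> word_image ab Z -> word_image ab (g * Z * g^-1).
Proof.
move=> ug [X [Y [SX SY <-]]]; exists (g * X * g^-1), (g * Y * g^-1).
by split; rewrite ?word_map_conj // ?unit_SL2 // /inSL2 det_conj.
Qed.

Fixpoint ydeg ab : nat := if ab is p :: r then (`|p.2| + ydeg r)%N else 0%N.

Fixpoint xpoly ab : {poly C} :=
  if ab is p :: r then p.1%:~R%:P + xpoly r * 'X^`|p.2| else 0.

Definition ypos ab := all (fun p : int * int => 0 < p.2) ab.

Definition admissible ab := all (fun p : int * int => (p.1 != 0) && (0 < p.2)) ab.

Lemma admissible_ypos ab : admissible ab -> ypos ab.
Proof. by apply: sub_all => p /andP[]. Qed.

Lemma ydeg_cat l1 l2 : ydeg (l1 ++ l2) = (ydeg l1 + ydeg l2)%N.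
Proof. by elim: l1 => //= p l ->; rewrite addnA. Qed.

Lemma xpoly_cat l1 l2 : xpoly (l1 ++ l2) = xpoly l1 + xpoly l2 * 'X^(ydeg l1).
Proof.
elim: l1 => [|p l IH] /=; first by rewrite add0r expr0 mulr1.
by rewrite IH mulrDl addrA -mulrA -exprD addnC.
Qed.

Lemma size_xpoly ab : ypos ab -> (size (xpoly ab) <= ydeg ab)%N.
Proof.
elim: ab => [|p ab IH] /=; first by rewrite size_poly0.
case/andP => b_gt0 /IH size_ab.
have b_pos : (0 < `|p.2|)%N by rewrite absz_gt0 gt_eqF.
rewrite (leq_trans (size_polyD _ _)) // geq_max size_polyC.
rewrite (leq_trans (leq_b1 _)) /=; last by rewrite (leq_trans b_pos) ?leq_addr.
by rewrite (leq_trans (size_polyMleq _ _)) // size_polyXn addnS /= addnC leq_add2l.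
Qed.

Lemma xpoly_coef0 p ab : 0 < p.2 -> (xpoly (p :: ab))`_0 = p.1%:~R.
Proof. by move=> b_gt0; rewrite /= coefD coefC coefMXn absz_gt0 (gt_eqF b_gt0) addr0. Qed.

Lemma xpoly_coef0_neq0 p ab : admissible (p :: ab) -> (xpoly (p :: ab))`_0 != 0.
Proof. by case/andP => /andP[a_neq0 b_gt0] _; rewrite xpoly_coef0 // intr_eq0. Qed.

Lemma xpoly_split ab e :
  (xpoly ab)`_e != 0 -> exists l1 l2, ab = l1 ++ l2 /\ ydeg l1 = e.
Proof.
elim: ab e => [|p ab IH] e /=; first by rewrite coef0 eqxx.
case: e => [|e]; first by exists [::], (p :: ab).
rewrite coefD coefC add0r coefMXn; case: ltnP => [_|b_le]; first by rewrite eqxx.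
by move=> /IH [l1 [l2 [-> deg1]]]; exists (p :: l1), l2; split => //=; lia.
Qed.

Lemma xpoly_eq0 ab : admissible ab -> (xpoly ab == 0) = (ab == [::]).
Proof.
case: ab => [|p ab] adm; first by rewrite eqxx.
by apply/negbTE; apply: contraNneq (xpoly_coef0_neq0 adm) => ->; rewrite coef0.
Qed.

Lemma xpoly_inj l1 l2 : admissible l1 -> admissible l2 ->
  ydeg l1 = ydeg l2 -> xpoly l1 = xpoly l2 -> l1 = l2.
Proof.
elim: l1 l2 => [|p r IH] [|q r'] // adm1 adm2 deg E.
- by move: (xpoly_eq0 adm2); rewrite -E /= eqxx.
- by move: (xpoly_eq0 adm1); rewrite E /= eqxx.
have /andP[/andP[_ b_gt0] adm_r] := adm1; have /andP[/andP[_ b'_gt0] adm_r'] := adm2.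
have ea : p.1 = q.1.
  by apply: (@intr_inj C); rewrite -(xpoly_coef0 r b_gt0) -(xpoly_coef0 r' b'_gt0) E.
have E' : xpoly r * 'X^`|p.2| = xpoly r' * 'X^`|q.2|.
  by move: E => /=; rewrite ea => /addrI.
have [eb <-] : `|p.2|%N = `|q.2|%N /\ r = r'.
  case: r r' adm_r adm_r' deg E' IH {adm1 adm2 E}
    => [|x r] [|y r'] adm_r adm_r' deg E' IH.
  - by split => //; move: deg => /=; lia.
  - move/eqP: E'; rewrite [xpoly [::]]/= mul0r eq_sym mulf_eq0 xpoly_eq0 //.
    by rewrite expf_eq0 polyX_eq0 andbF.
  - move/eqP: E'; rewrite [xpoly [::]]/= mul0r mulf_eq0 xpoly_eq0 //.
    by rewrite expf_eq0 polyX_eq0 andbF.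
  have [eb Er] := mulXn_inj (xpoly_coef0_neq0 adm_r) (xpoly_coef0_neq0 adm_r') E'.
  by split => //; apply: IH => //; move: deg => /=; lia.
case: p q ea eb b_gt0 b'_gt0 {adm1 adm2 deg E E'} => [a b] [a' b'] /= -> eb b_gt0 b'_gt0.
by rewrite -(gtz0_abs b_gt0) -(gtz0_abs b'_gt0) eb.
Qed.

Lemma admissible_square ab m : admissible ab -> ydeg ab = (m + m)%N ->
  take_poly m (xpoly ab) = drop_poly m (xpoly ab) -> exists l, ab = l ++ l.
Proof.
case: ab => [|p r]; first by exists [::].
set ab := p :: r => adm deg td.
have m_gt0 : (0 < m)%N.
  case/andP: adm => /andP[_ b_gt0] _.
  have : (0 < `|p.2|)%N by rewrite absz_gt0 gt_eqF.
  by move: deg => /=; lia.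
have coef_m : (xpoly ab)`_m != 0.
  by rewrite -[m]add0n -coef_drop_poly -td coef_take_poly m_gt0 xpoly_coef0_neq0.
have [l1 [l2 [ab_eq deg1]]] := xpoly_split coef_m.
move: adm deg td; rewrite ab_eq /admissible all_cat ydeg_cat xpoly_cat deg1.
move=> /andP[adm1 adm2] deg2.
have size1 : (size (xpoly l1) <= m)%N by rewrite -deg1 size_xpoly ?admissible_ypos.
rewrite take_polyDMXn // drop_polyDMXn // => E.
by exists l1; congr (_ ++ _); apply: xpoly_inj => //; lia.
Qed.

Lemma word_map_1Y ab Y : ypos ab -> word_map ab 1 Y = Y ^+ ydeg ab.
Proof.
elim: ab => [|p ab IH] /=; first by rewrite word_map_nil expr0.
by case/andP=> b_gt0 /IH; rewrite word_map_cons exp1rz mul1r exprz_pos // exprD => ->.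
Qed.

Lemma word_map_unipotent_diag ab (nu : C) : nu != 0 -> ypos ab ->
  word_map ab (mx2 1 1 0 1) (mx2 nu 0 0 nu^-1) =
  mx2 (nu ^+ ydeg ab) ((nu ^+ ydeg ab)^-1 * (xpoly ab).[nu ^+ 2]) 0 (nu ^+ ydeg ab)^-1.
Proof.
move=> nu0; elim: ab => [|p ab IH] /=.
  by rewrite word_map_nil expr0 invr1 horner0 mulr0 mx2_1.
case/andP=> b_gt0 /IH {}IH.
rewrite word_map_cons exprz_mx2_unipotent exprz_pos // expr_mx2_diag IH.
rewrite !hornerE exprD !exprVn !mulmx2 -exprAC.
have nub0 : nu ^+ `|p.2| != 0 by rewrite expf_neq0.
have nuB0 : nu ^+ ydeg ab != 0 by rewrite expf_neq0.
by congr mx2; field; rewrite ?nub0 ?nuB0.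
Qed.

Section WordImage.

Variable ab : seq (int * int).
Hypothesis ab_ypos : ypos ab.
Hypothesis ydeg_gt0 : (0 < ydeg ab)%N.

Lemma word_image_diag (u : C) : u != 0 -> word_image ab (mx2 u 0 0 u^-1).
Proof.
move=> u0; pose v := (ydeg ab).-root u.
have vB : v ^+ ydeg ab = u by rewrite rootCK.
have v0 : v != 0 by apply: contra_neq u0 => v0; rewrite -vB v0 expr0n eqn0Ngt ydeg_gt0.
exists 1, (mx2 v 0 0 v^-1); split; rewrite /inSL2 ?det1 //.
  by rewrite det_mx2 mulfV // mulr0 subr0.
by rewrite word_map_1Y // expr_mx2_diag exprVn vB.
Qed.

Lemma word_image_unipotent : word_image ab (mx2 1 (ydeg ab)%:R 0 1).
Proof.
exists 1, (mx2 1 1 0 1); split; rewrite /inSL2 ?det1 ?det_mx2 ?mulr1 ?mulr0 ?subr0 //.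
by rewrite word_map_1Y // expr_mx2_upper !expr1n !mulr1.
Qed.

Lemma word_image_rescale (u c c' : C) : c != 0 -> c' != 0 ->
  word_image ab (mx2 u c 0 u) -> word_image ab (mx2 u c' 0 u).
Proof.
move=> c0 c'0 /(word_image_conj (g := mx2 (c' / c) 0 0 1)).
have ug : mx2 (c' / c) 0 0 1 \is a GRing.unit.
  by rewrite unit_mx2 unitfE mulr1 mulr0 subr0 mulf_neq0 ?invr_eq0.
have -> : (mx2 (c' / c) 0 0 1)^-1 = mx2 (c / c') 0 0 1.
  by apply: mulmx1_invr; rewrite mulmx2 mx2_1; congr mx2; field; rewrite ?c0 ?c'0.
by rewrite !mulmx2 => /(_ ug); congr (word_image _ (mx2 _ _ _ _)); field; rewrite ?c0 ?c'0.
Qed.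

Lemma word_image_shear (u v c : C) : u != v ->
  word_image ab (mx2 u 0 0 v) -> word_image ab (mx2 u c 0 v).
Proof.
move=> uv /(word_image_conj (g := mx2 1 (c / (v - u)) 0 1)).
have vu0 : v - u != 0 by rewrite subr_eq0 eq_sym.
have ug : mx2 1 (c / (v - u)) 0 1 \is a GRing.unit.
  by rewrite unit_mx2 mulr1 mulr0 subr0 unitr1.
have -> : (mx2 1 (c / (v - u)) 0 1)^-1 = mx2 1 (- (c / (v - u))) 0 1.
  by apply: mulmx1_invr; rewrite mulmx2 mx2_1; congr mx2; ring.
rewrite !mulmx2 => /(_ ug); congr (word_image _ (mx2 _ _ _ _)); try ring.
by field.
Qed.

Lemma word_image_triangular (c' : C) : c' != 0 -> word_image ab (mx2 (-1) c' 0 (-1)) ->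
  forall u c v : C, u * v = 1 -> word_image ab (mx2 u c 0 v).
Proof.
move=> c'0 negU u c v uv1.
have u0 : u != 0 by apply: contra_eq_neq uv1 => ->; rewrite mul0r eq_sym oner_eq0.
have -> : v = u^-1 by rewrite -[v]mul1r -(mulVf u0) -mulrA uv1 mulr1.
(* Distinct eigenvalues: conjugate to the diagonal; equal ones: u = v = 1 or u = v = -1. *)
have [uu|uv] := eqVneq u u^-1; last exact: word_image_shear uv (word_image_diag u0).
have [->|c0] := eqVneq c 0; first exact: word_image_diag.
rewrite -uu; have uu1 : u * u = 1 by rewrite {2}uu mulfV.
have : (u - 1) * (u + 1) = u * u - 1 by ring.
rewrite uu1 subrr => /eqP; rewrite mulf_eq0 subr_eq0 addr_eq0.
case/orP => /eqP->; last exact: word_image_rescale negU.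
apply: word_image_rescale word_image_unipotent => //.
by rewrite pnatr_eq0 -lt0n.
Qed.

Lemma word_map_surjective_of_neg_unipotent (c : C) : c != 0 ->
  word_image ab (mx2 (-1) c 0 (-1)) -> word_map_surjective ab.
Proof.
move=> c0 negU Z; have [g [u [c' [v [ug ->]]]]] := mx2_triangularize Z.
rewrite /inSL2 det_conj // det_mx2 mulr0 subr0 => uv1.
exact/(word_image_conj ug)/(word_image_triangular c0 negU).
Qed.

Lemma word_image_odd : odd (ydeg ab) -> word_image ab (mx2 (-1) (ydeg ab)%:R 0 (-1)).
Proof.
move=> deg_odd; exists 1, (mx2 (-1) 1 0 (-1)).
split; rewrite /inSL2 ?det1 ?det_mx2 ?mulrNN ?mulr1 ?mulr0 ?subr0 // word_map_1Y //.
rewrite expr_mx2_upper; move: deg_odd; case: (ydeg ab) => // n /= /negbTE n_even.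
by rewrite exprS -signr_odd n_even !mulr1.
Qed.

Lemma word_image_nonroot m (w : C) : ydeg ab = (m + m)%N -> w ^+ m = -1 ->
  word_image ab (mx2 (-1) (- (xpoly ab).[w]) 0 (-1)).
Proof.
move=> deg_m wm; pose nu := sqrtC w.
have nu2 : nu ^+ 2 = w := sqrtCK w.
have nuB : nu ^+ ydeg ab = -1 by rewrite deg_m addnn -mul2n exprM nu2 wm.
have nu0 : nu != 0.
  by apply: contra_eq_neq nuB => ->; rewrite expr0n gtn_eqF // eq_sym oppr_eq0 oner_eq0.
exists (mx2 1 1 0 1), (mx2 nu 0 0 nu^-1).
split; rewrite /inSL2 ?det_mx2 ?mulr1 ?mulfV ?mulr0 ?subr0 //.
by rewrite word_map_unipotent_diag // nu2 nuB invrN1 mulN1r.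
Qed.

End WordImage.

Definition yweight (l : letter) : int := if l.1 then (if l.2 then -1 else 1) else 0.

Definition ysum (s : seq letter) : int := \sum_(l <- s) yweight l.

Lemma ysum_freduce s : ysum (freduce s) = ysum s.
Proof.
rewrite /ysum; elim: s => [|l s IH] //=; rewrite big_cons -IH.
case: (freduce s) => [|l' r]; first by rewrite big_cons.
case: ifP => [/eqP -> | _]; last by rewrite !big_cons.
rewrite big_cons addrA.
by case: l => [[] []]; rewrite /yweight /= ?addNr ?addrN !add0r.
Qed.

Lemma ysum_word_of ab : ypos ab -> ysum (word_of ab) = (ydeg ab)%:Z.
Proof.
rewrite /ysum /word_of; elim: ab => [|p ab IH] /=; first by rewrite big_nil.
case/andP => b_gt0 /IH {}IH; rewrite !big_cat /= IH /gen_pow !big_nseq /yweight /=.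
by rewrite !iter_addr mul0rn !addr0 add0r ltNge (ltW b_gt0) /= PoszD natz.
Qed.

Lemma word_of_cat l1 l2 : word_of (l1 ++ l2) = word_of l1 ++ word_of l2.
Proof. by rewrite /word_of map_cat flatten_cat. Qed.

Lemma word_of_neq1 ab : ypos ab -> (0 < ydeg ab)%N -> ~ F2_eq (word_of ab) [::].
Proof.
move=> yp deg_gt0 /(congr1 ysum); rewrite ysum_freduce ysum_word_of // /ysum big_nil.
by move=> /eqP; rewrite eqz_nat eqn0Ngt deg_gt0.
Qed.

Theorem corollary1p4 (ab : seq (int * int)) :
  (0 < size ab)%N ->
  (forall p, p \in ab -> p.1 != 0) ->
  (forall p, p \in ab -> 0 < p.2) ->
  word_map_surjective ab \/
  exists v : seq letter, ~ F2_eq v [::] /\ F2_eq (word_of ab) (v ++ v).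
Proof.
move=> ab_gt0 a_neq0 b_gt0.
have adm : admissible ab by apply/allP => p p_ab; rewrite a_neq0 ?b_gt0.
have yp := admissible_ypos adm.
have deg_gt0 : (0 < ydeg ab)%N.
  case: ab ab_gt0 b_gt0 {a_neq0 adm yp} => // p r _ b_gt0.
  by rewrite addn_gt0 absz_gt0 gt_eqF ?b_gt0 ?mem_head.
have [deg_odd | deg_even] := boolP (odd (ydeg ab)).
  left; apply: (word_map_surjective_of_neg_unipotent yp deg_gt0 _ (word_image_odd yp deg_odd)).
  by rewrite pnatr_eq0 -lt0n.
have [m deg_m] : exists m, ydeg ab = (m + m)%N.
  by exists (ydeg ab)./2; rewrite addnn -[LHS]odd_double_half (negbTE deg_even).
have m_neq0 : m%:R != 0 :> C by rewrite pnatr_eq0; move: deg_gt0; rewrite deg_m; lia.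
have [rs [rs_uniq rs_size rs_root]] := roots_Xn_add_1 m_neq0.
have [vanish | /allPn[w w_rs Pw_neq0]] := boolP (all (root (xpoly ab)) rs).
  right; have [|l ab_ll] := admissible_square adm deg_m.
    by apply: take_drop_poly_eq rs_uniq rs_size rs_root _ vanish; rewrite -deg_m size_xpoly.
  have yp_l : ypos l by move: yp; rewrite ab_ll /ypos all_cat => /andP[].
  exists (word_of l); split; last by rewrite ab_ll word_of_cat.
  by apply: word_of_neq1 => //; move: deg_gt0; rewrite ab_ll ydeg_cat; lia.
left; have img := word_image_nonroot yp deg_gt0 deg_m (rs_root w w_rs).
by apply: (word_map_surjective_of_neg_unipotent yp deg_gt0 _ img); rewrite oppr_eq0.
Qed.
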